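(* Let $M$ be a $3$-connected matroid, let $\mathcal{T}$ be a tangle of $M$, and let $C,D$ be disjoint subsets of $E(M)$ such that $C\cup D$ is independent in the tangle matroid $M(\mathcal{T})$ and $M/C\setminus D$ is $3$-connected. Then for each $d\in D$, either $M/C\setminus(D\setminus d)$ is $3$-connected or there is an element $c\in C$ such that $M/(C\setminus c)\setminus(D\setminus d)$ is $3$-connected.
   Context: $\lambda_M(X) = \rank_M(X) + \rank_M(E(M)\setminus X) - \rank(M)$. A tangle of order $\theta$ of $M$ is a collection $\mathcal{T}$ of subsets of $E(M)$ such that: (i) $\lambda_M(X)<\theta$ for all $X\in\mathcal{T}$; (ii) for every $X\subseteq E(M)$ with $\lambda_M(X)<\theta$, either $X\in\mathcal{T}$ or $E(M)\setminus X\in\mathcal{T}$; (iii) if $X,Y,Z\in\mathcal{T}$ then $X\cup Y\cup Z\neq E(M)$; (iv) $E(M)\setminus\{e\}\notin\mathcal{T}$ for every $e\in E(M)$. The tangle matroid $M(\mathcal{T})$ has rank function $\rank_{\mathcal{T}}(X) = \min\{\lambda_M(Y): X\subseteq Y\in\mathcal{T}\}$ if some member of $\mathcal{T}$ contains $X$, and $\theta$ otherwise. *)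

(* Matroids given by a ground set E : {set T} (T a finType)
   and a rank function r : {set T} -> nat (only its values on subsets of E matter). *)
From mathcomp Require Import all_boot.
Set Implicit Arguments. Unset Strict Implicit. Unset Printing Implicit Defensive.

Section Matroids.
Variable T : finType.

Definition is_matroid (E : {set T}) (r : {set T} -> nat) : Prop :=
  [/\ (forall X : {set T}, X \subset E -> r X <= #|X|),
      (forall X Y : {set T}, X \subset Y -> Y \subset E -> r X <= r Y) &
      (forall X Y : {set T}, X \subset E -> Y \subset E ->
         r (X :|: Y) + r (X :&: Y) <= r X + r Y)].

Definition lambda (E : {set T}) (r : {set T} -> nat) (X : {set T}) : nat :=
  r X + r (E :\: X) - r E.

Definition k_separation (E : {set T}) (r : {set T} -> nat) (k : nat) (X : {set T}) :=
  [/\ X \subset E, k <= #|X|, k <= #|E :\: X| & lambda E r X < k].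

Definition three_connected (E : {set T}) (r : {set T} -> nat) : Prop :=
  forall k (X : {set T}), k < 3 -> ~ k_separation E r k X.

(* Minors: M / C \ D has ground set E - (C u D) and rank X |-> r(X u C) - r(C). *)
Definition minor_ground (E C D : {set T}) : {set T} := E :\: (C :|: D).
Definition contr_rank (r : {set T} -> nat) (C : {set T}) : {set T} -> nat :=
  fun X => r (X :|: C) - r C.

Definition is_tangle (E : {set T}) (r : {set T} -> nat) (theta : nat)
    (Tg : {set {set T}}) : Prop :=
  [/\ (forall X : {set T}, X \in Tg -> X \subset E /\ lambda E r X < theta),
      (forall X : {set T}, X \subset E -> lambda E r X < theta ->
          X \in Tg \/ E :\: X \in Tg),
      (forall X Y Z : {set T}, X \in Tg -> Y \in Tg -> Z \in Tg -> X :|: Y :|: Z != E) &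
      (forall e, e \in E -> E :\ e \notin Tg)].

Definition tangle_rank (E : {set T}) (r : {set T} -> nat) (theta : nat)
    (Tg : {set {set T}}) (X : {set T}) : nat :=
  if [exists Y in Tg, X \subset Y]
  then \big[minn/theta]_(Y in Tg | X \subset Y) lambda E r Y
  else theta.

Definition tangle_indep (E : {set T}) (r : {set T} -> nat) (theta : nat)
    (Tg : {set {set T}}) (X : {set T}) : Prop :=
  X \subset E /\ tangle_rank E r theta Tg X = #|X|.

End Matroids.

From mathcomp Require Import all_boot.
From Stdlib Require Import Classical FunctionalExtensionality.
From mathcomp Require Import zify.
Set Implicit Arguments. Unset Strict Implicit. Unset Printing Implicit Defensive.

(* Let N = M/C\D and N1 = M/C\(D - d).  Deleting d does not increase
   connectivity, so if N1 is not 3-connected, a separation of N1 gives one of N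
   unless it is a 2-separating pair {d, e} with e in E(N); a 1-separating {d} is
   impossible because the tangle forces lambda(Z) >= |Z| for Z inside C u D.
   Thus d and e are parallel in N1.  Tangle independence of C u D, applied to
   C u D + e, makes C independent and E(N) - e spanning in M, while r{d, e} = 2
   because M is 3-connected; hence {d, e} is not parallel in M/(C - c) for some
   c in C.  In N2 = M/(C - c)\(D - d), a separation either restricts to one of
   N, or has a side meeting E(N) in at most one element a; the rank equations
   rule out every position of c and d, except when that side is {a, d}, where
   {a, e} would be 2-separating in N, so N is tiny and the tangle cannot
   orient X u (C - c) u (D - d). *)

Lemma subset_imply (T : finType) (A B : {set T}) :
  A \subset B -> forall y, (y \in A) ==> (y \in B).
Proof. by move=> sAB y; apply/implyP; apply: (subsetP sAB). Qed.

(* Decides set (in)equalities and inclusions by reducing them to membership of a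
   generic element [y], using every pointwise hypothesis [forall y, _] in the
   context; subset hypotheses enter through [subset_imply]. *)
Ltac set_solve :=
  let y := fresh "y" in
  repeat (let h := fresh "h" in intro h);
  try (match goal with |- (?b = true) => change (is_true b) end);
  first [apply/subsetP => y | apply/setP => y];
  rewrite ?inE;
  repeat match goal with
   | H : forall _, is_true _ |- context [y] => move: (H y); clear H
   end;
  rewrite ?inE;
  repeat match goal with
   | |- context [y == ?z] => case: (y =P z) => [->|_]
   end;
  rewrite ?eqxx;
  repeat match goal with
  | H : is_true (?z \in ?A) |- context [?z \in ?A] => rewrite H
  | H : is_true (~~ (?z \in ?A)) |- context [?z \in ?A] => rewrite (negbTE H)
  | H : (?z \in ?A) = ?b |- context [?z \in ?A] => rewrite H
  | H : is_true (?z != ?w) |- context [?z == ?w] => rewrite (negbTE H)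
  | H : is_true (?z != ?w) |- context [?w == ?z] => rewrite eq_sym (negbTE H)
  end;
  repeat match goal with
  | |- context [?z \in ?A] => case: (z \in A)
  | |- context [?z == ?w] => case: (z == w)
  end; try done.

(* [lia] case-splits on every boolean hypothesis, so membership and inclusion
   facts, irrelevant to it, are cleared first. *)
Ltac arith :=
  repeat match goal with
  | H : is_true (_ \in _) |- _ => clear H
  | H : is_true (~~ (_ \in _)) |- _ => clear H
  | H : is_true (_ \subset _) |- _ => clear H
  | H : is_true [disjoint _ & _] |- _ => clear H
  | H : is_true (_ != _) |- _ => clear H
  | H : forall _, is_true (~~ (_ && _)) |- _ => clear H
  end; lia.

Lemma lambdaC (T : finType) (E : {set T}) (r : {set T} -> nat) (X : {set T}) :
  X \subset E -> lambda E r X = lambda E r (E :\: X).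
Proof.
by move=> sXE; rewrite /lambda setDDr setDv set0U (setIidPr sXE) addnC.
Qed.

Lemma three_connected_lambda (T : finType) (E : {set T}) r k (X : {set T}) :
  three_connected E r -> X \subset E -> k < 3 -> k <= #|X| -> k <= #|E :\: X| ->
  k <= lambda E r X.
Proof.
move=> h3 sXE hk hX hXc; rewrite leqNgt; apply/negP => hlt.
exact: (h3 k X hk).
Qed.

Section Rank.
Variables (T : finType) (E : {set T}) (r : {set T} -> nat).
Hypothesis hM : is_matroid E r.
Implicit Types A F I K L U X Y Z : {set T}.

Lemma rank_le_card X : X \subset E -> r X <= #|X|.
Proof. by case: hM => h _ _; apply: h. Qed.

Lemma rank_mono X Y : X \subset Y -> Y \subset E -> r X <= r Y.
Proof. by case: hM => _ h _; apply: h. Qed.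

Lemma rank_submod X Y :
  X \subset E -> Y \subset E -> r (X :|: Y) + r (X :&: Y) <= r X + r Y.
Proof. by case: hM => _ _ h; apply: h. Qed.

Lemma rank0 : r set0 = 0.
Proof. by have := rank_le_card (sub0set E); rewrite cards0; case: (r set0). Qed.

Lemma rank_submod_le X Y U I : X \subset E -> Y \subset E ->
  U \subset X :|: Y -> I \subset X :&: Y -> r U + r I <= r X + r Y.
Proof.
move=> sXE sYE sU sI.
have := rank_submod sXE sYE.
have := rank_mono sU (_ : X :|: Y \subset E); rewrite subUset sXE sYE.
have := rank_mono sI (subset_trans (subsetIl X Y) sXE).
lia.
Qed.

Lemma rank_le_add_card X Y U :
  X \subset E -> Y \subset E -> U \subset X :|: Y -> r U <= r X + #|Y|.
Proof.
move=> sXE sYE sU.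
have := rank_submod_le sXE sYE sU (sub0set _).
have := rank_le_card sYE; rewrite rank0; lia.
Qed.

Lemma lambdaE X : X \subset E -> lambda E r X + r E = r X + r (E :\: X).
Proof.
move=> sXE; rewrite /lambda.
have : r E + r set0 <= r X + r (E :\: X).
  by apply: rank_submod_le => //; [exact: subsetDl | set_solve | exact: sub0set].
rewrite rank0; lia.
Qed.

Lemma lambda_le_rank X : X \subset E -> lambda E r X <= r X.
Proof. by move=> sXE; have := rank_mono (subsetDl E X) (subxx E); rewrite /lambda; lia. Qed.

Lemma lambda_setU_le A U : A \subset E -> U \subset E ->
  lambda E r (A :|: U) <= lambda E r A + #|U|.
Proof.
move=> sAE sUE; rewrite /lambda.
have := rank_le_add_card sAE sUE (subxx _).
have := rank_mono (setDS E (subsetUl A U)) (subsetDl E A).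
lia.
Qed.

(* Stated additively, to avoid truncated subtraction. *)
Lemma lambda_contr_rankE K F X : K \subset E -> F \subset E -> X \subset F ->
  lambda F (contr_rank r K) X + r K + r (F :|: K) =
  r (X :|: K) + r ((F :\: X) :|: K).
Proof.
move=> sKE sFE sXF; rewrite /lambda /contr_rank.
have sXE := subset_trans sXF sFE.
have sXC : X :|: K \subset E by rewrite subUset sXE.
have sFC : F :|: K \subset E by rewrite subUset sFE.
have sFXC : (F :\: X) :|: K \subset E.
  by rewrite subUset sKE andbT (subset_trans (subsetDl _ _) sFE).
have := rank_mono (subsetUr X K) sXC.
have := rank_mono (subsetUr (F :\: X) K) sFXC.
have := rank_mono (subsetUr F K) sFC.
have : r (F :|: K) + r K <= r (X :|: K) + r ((F :\: X) :|: K).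
  by apply: rank_submod_le => //; move: (subset_imply sXF); set_solve.
lia.
Qed.

Lemma lambda_minor_le K L X : K \subset E -> L \subset E ->
  X \subset E :\: (K :|: L) ->
  lambda E r (X :|: K :|: L) <=
  lambda (E :\: (K :|: L)) (contr_rank r K) X + #|K| + #|L|.
Proof.
move=> sKE sLE sX.
have sFE : E :\: (K :|: L) \subset E by exact: subsetDl.
have := lambda_contr_rankE sKE sFE sX.
have eW : E :\: (X :|: K :|: L) = (E :\: (K :|: L)) :\: X.
  by move: (subset_imply sX); set_solve.
rewrite /lambda eW.
have sXK : X :|: K \subset E by rewrite subUset sKE (subset_trans sX sFE).
have sFXK : ((E :\: (K :|: L)) :\: X) :|: K \subset E.
  by rewrite subUset sKE (subset_trans (subsetDl _ _) sFE).
have sFK : (E :\: (K :|: L)) :|: K \subset E by rewrite subUset sFE sKE.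
have := rank_le_add_card sXK sLE (subxx (X :|: K :|: L)).
have := rank_mono (subsetUl ((E :\: (K :|: L)) :\: X) K) sFXK.
have := rank_mono sFK (subxx E).
have := rank_le_card sKE.
lia.
Qed.

Lemma rank_spanning Y Z : r Y = r E -> Y \subset Z -> Z \subset E -> r Z = r E.
Proof. by move=> rY sYZ sZE; have := rank_mono sYZ sZE; have := rank_mono sZE (subxx E); lia. Qed.

Lemma lambda_minor_delete_le K F X x : K \subset E -> F \subset E -> X \subset F ->
  x \in X -> lambda (F :\ x) (contr_rank r K) (X :\ x) <= lambda F (contr_rank r K) X.
Proof.
move=> sKE sFE sXF xX.
have sFxE : F :\ x \subset E := subset_trans (subsetDl _ _) sFE.
have sXxF : X :\ x \subset F :\ x by move: (subset_imply sXF); set_solve.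
have := lambda_contr_rankE sKE sFE sXF.
have := lambda_contr_rankE sKE sFxE sXxF.
have -> : (F :\ x) :\: (X :\ x) = F :\: X by set_solve.
have sXKE : X :|: K \subset E by rewrite subUset sKE (subset_trans sXF sFE).
have sFxKE : (F :\ x) :|: K \subset E by rewrite subUset sKE sFxE.
have : r (F :|: K) + r ((X :\ x) :|: K) <= r (X :|: K) + r ((F :\ x) :|: K).
  by apply: rank_submod_le => //; move: (subset_imply sXF); set_solve.
lia.
Qed.

End Rank.

Lemma three_connected_rank_pair (T : finType) (E : {set T}) r x y :
  is_matroid E r -> three_connected E r -> x \in E -> y \in E -> x != y ->
  2 <= #|E :\: [set x; y]| -> 2 <= r [set x; y].
Proof.
move=> hM hM3 xE yE xy hc.
have sxyE : [set x; y] \subset E by rewrite subUset !sub1set xE yE.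
have hxy : 2 <= #|[set x; y]| by rewrite cards2 xy.
have := three_connected_lambda (k := 2) hM3 sxyE isT hxy hc.
by have := lambda_le_rank hM sxyE; lia.
Qed.

Lemma bigminn_le (I : finType) (P : pred I) (F : I -> nat) m j :
  P j -> \big[minn/m]_(i | P i) F i <= F j.
Proof.
move=> Pj; have : j \in index_enum I by rewrite mem_index_enum.
elim: (index_enum I) => //= i s IH; rewrite inE big_cons.
case/orP => [/eqP <-|/IH h]; first by rewrite Pj geq_minl.
by case: (P i) => //; rewrite geq_min h orbT.
Qed.

Lemma card_setU3 (T : finType) (K L X : {set T}) :
  [disjoint K & L] -> [disjoint X & K :|: L] ->
  #|X :|: K :|: L| = #|X| + #|K| + #|L|.
Proof.
move=> dKL dX; rewrite -setUA cardsU (disjoint_setI0 dX) cards0 subn0.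
by rewrite cardsU (disjoint_setI0 dKL) cards0 subn0 addnA.
Qed.

Section Tangle.
Variables (T : finType) (E : {set T}) (r : {set T} -> nat) (theta : nat).
Variable Tg : {set {set T}}.
Hypothesis hM : is_matroid E r.
Hypothesis hT : is_tangle E r theta Tg.
Implicit Types A K L S U W X Y Z : {set T}.

Lemma tangle_sub X : X \in Tg -> X \subset E.
Proof. by case: hT => h _ _ _ /h []. Qed.

Lemma tangle_lambda X : X \in Tg -> lambda E r X < theta.
Proof. by case: hT => h _ _ _ /h []. Qed.

Lemma tangle_or_compl X : X \subset E -> lambda E r X < theta ->
  X \in Tg \/ E :\: X \in Tg.
Proof. by case: hT => _ h _ _; apply: h. Qed.

Lemma tangle_cover_false X Y Z : X \in Tg -> Y \in Tg -> Z \in Tg ->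
  E \subset X :|: Y :|: Z -> False.
Proof.
move=> hX hY hZ sE; case: hT => _ _ /(_ X Y Z hX hY hZ) /negP h _; apply: h.
by rewrite eqEsubset sE !subUset !tangle_sub.
Qed.

Lemma lambda_set1_le x : x \in E -> lambda E r [set x] <= 1.
Proof.
move=> xE; have sxE : [set x] \subset E by rewrite sub1set.
by have := lambda_le_rank hM sxE; have := rank_le_card hM sxE; rewrite cards1; lia.
Qed.

Lemma tangle_set1 x : x \in E -> lambda E r [set x] < theta -> [set x] \in Tg.
Proof.
move=> xE hlt; have sxE : [set x] \subset E by rewrite sub1set.
by case: (tangle_or_compl sxE hlt) => //; case: hT => _ _ _ /(_ x xE) /negP.
Qed.

Lemma tangle_set0 : 0 < theta -> set0 \in Tg.
Proof.
move=> theta_gt0.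
have : lambda E r set0 < theta by rewrite /lambda (rank0 hM) setD0 subnn.
case/(tangle_or_compl (sub0set E)) => // hE; rewrite setD0 in hE.
by case: (tangle_cover_false hE hE hE); rewrite !setUid.
Qed.

Lemma tangle_setU A U : A \in Tg -> U \subset E ->
  lambda E r A + #|U| < theta -> A :|: U \in Tg.
Proof.
move=> hA; move En : #|U| => n; elim: n U En => [|n IH] U hn sUE hlt.
  by move/cards0_eq: hn => ->; rewrite setU0.
have /card_gt0P [x xU] : 0 < #|U| by rewrite hn.
have xE : x \in E := subsetP sUE x xU.
have hAU : A :|: (U :\ x) \in Tg.
  apply: IH; last by lia.
    by move: hn; rewrite (cardsD1 x U) xU; case.
  exact: subset_trans (subsetDl _ _) sUE.
have hx : [set x] \in Tg.
  by apply: tangle_set1 => //; have := lambda_set1_le xE; lia.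
have sAUE : A :|: U \subset E by rewrite subUset tangle_sub.
have : lambda E r (A :|: U) < theta.
  by have := lambda_setU_le hM (tangle_sub hA) sUE; rewrite hn; lia.
case/(tangle_or_compl sAUE) => // hC.
by case: (tangle_cover_false hC hAU hx); set_solve.
Qed.

Lemma tangle_small Z : Z \subset E -> #|Z| < theta -> Z \in Tg.
Proof.
move=> sZE hZ; rewrite -[Z]set0U; apply: tangle_setU => //.
  by apply: tangle_set0; lia.
by rewrite /lambda (rank0 hM) setD0 subnn.
Qed.

Lemma tangle_compl_card Z x : Z \in Tg -> x \in E :\: Z -> 2 <= theta ->
  theta < #|E :\: Z|.
Proof.
move=> hZ xEZ theta_ge2; rewrite ltnNge; apply/negP => hc.
have xE : x \in E by move: xEZ; rewrite inE => /andP [].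
have hZx : (E :\: Z) :\ x \in Tg.
  apply: tangle_small; first exact: subset_trans (subsetDl _ _) (subsetDl _ _).
  by move: hc; rewrite (cardsD1 x (E :\: Z)) xEZ; lia.
have hx : [set x] \in Tg by apply: tangle_small; rewrite ?sub1set ?cards1.
by case: (tangle_cover_false hZ hZx hx); set_solve.
Qed.

Lemma tangle_lambda_ge_small_sides W x y : W \subset E -> x \in W ->
  y \in E :\: W -> 2 <= theta -> #|W| <= theta -> #|E :\: W| <= theta ->
  theta <= lambda E r W.
Proof.
move=> sWE xW yW ht hW hWc; rewrite leqNgt; apply/negP => hlt.
have eW : E :\: (E :\: W) = W by rewrite setDDr setDv set0U (setIidPr sWE).
case: (tangle_or_compl sWE hlt) => hTW.
  by have := tangle_compl_card hTW yW ht; lia.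
by have := tangle_compl_card hTW (_ : x \in _) ht; rewrite eW => /(_ xW); lia.
Qed.

Section Independent.
Variable S : {set T}.
Hypothesis hS : tangle_indep E r theta Tg S.

Lemma tangle_indep_card_le : #|S| <= theta.
Proof.
case: hS => _ <-; rewrite /tangle_rank; case: ifP => // _.
by elim/big_ind: _ => // [x y|Y /andP [/tangle_lambda /ltnW]]; rewrite ?geq_min => ->.
Qed.

Lemma tangle_indep_lambda_ge Y : Y \in Tg -> S \subset Y -> #|S| <= lambda E r Y.
Proof.
move=> hY sSY; case: hS => _ <-; rewrite /tangle_rank.
have -> : [exists Y in Tg, S \subset Y] by apply/existsP; exists Y; rewrite hY.
by apply: bigminn_le; rewrite hY.
Qed.

Lemma tangle_indep_lambda_sub Z : Z \subset S -> #|Z| <= lambda E r Z.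
Proof.
move=> sZS; rewrite leqNgt; apply/negP => hlt.
have sSE : S \subset E by case: hS.
have sZE := subset_trans sZS sSE.
have hZS : #|Z| <= #|S| by exact: subset_leq_card.
have hth := tangle_indep_card_le.
case: (tangle_or_compl sZE (leq_trans hlt (leq_trans hZS hth))) => hZ.
  have sSZE : S :\: Z \subset E by exact: subset_trans (subsetDl _ _) sSE.
  have hcS : #|S :\: Z| = #|S| - #|Z| by rewrite cardsD (setIidPr sZS).
  have hZS' : Z :|: (S :\: Z) \in Tg by apply: tangle_setU => //; rewrite hcS; lia.
  have sS : S \subset Z :|: (S :\: Z) by set_solve.
  have := tangle_indep_lambda_ge hZS' sS.
  by have := lambda_setU_le hM sZE sSZE; rewrite hcS; lia.
have /card_gt0P [x xZ] : 0 < #|Z| by lia.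
have xE : x \in E := subsetP sZE x xZ.
have hZx : Z :\ x \in Tg.
  apply: tangle_small; first exact: subset_trans (subsetDl _ _) sZE.
  by move: hZS; rewrite (cardsD1 x Z) xZ; lia.
have hx : [set x] \in Tg.
  apply: tangle_set1 => //; case: (ltnP 1 theta) => ht.
    by have := lambda_set1_le xE; lia.
  have hZ1 : #|Z| = 1 by lia.
  have /cards1P [y eZ] : #|Z| == 1 by rewrite hZ1.
  by move: xZ hlt; rewrite eZ cards1 inE => /eqP ->; lia.
by case: (tangle_cover_false hZ hZx hx); set_solve.
Qed.

Lemma tangle_indep_lambda_sup W : W \subset E -> S \subset W ->
  #|W :\: S| <= 1 -> 3 <= theta -> #|S| <= lambda E r W.
Proof.
move=> sWE sSW hWS ht; rewrite leqNgt; apply/negP => hlt.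
have sSE : S \subset E by case: hS.
have hth := tangle_indep_card_le.
case: (tangle_or_compl sWE (leq_trans hlt hth)) => hW.
  by have := tangle_indep_lambda_ge hW sSW; lia.
have /card_gt0P [x xS] : 0 < #|S| by lia.
have xE : x \in E := subsetP sSE x xS.
have hSx : S :\ x \in Tg.
  apply: tangle_small; first exact: subset_trans (subsetDl _ _) sSE.
  by move: hth; rewrite (cardsD1 x S) xS; lia.
have hWSx : (W :\: S) :|: [set x] \in Tg.
  apply: tangle_small.
    by rewrite subUset sub1set xE andbT (subset_trans (subsetDl _ _) sWE).
  by have := cardsU (W :\: S) [set x]; rewrite cards1; lia.
by case: (tangle_cover_false hW hSx hWSx); set_solve.
Qed.

Lemma minor_lambda_ge_card K L X : K \subset S -> L \subset S -> [disjoint K & L] ->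
  X \subset E :\: (K :|: L) -> X \subset S ->
  #|X| <= lambda (E :\: (K :|: L)) (contr_rank r K) X.
Proof.
move=> sKS sLS dKL sX sXS.
have sSE : S \subset E by case: hS.
have sW : X :|: K :|: L \subset S by rewrite !subUset sXS sKS sLS.
have := tangle_indep_lambda_sub sW.
have := lambda_minor_le hM (subset_trans sKS sSE) (subset_trans sLS sSE) sX.
move: sX; rewrite subsetD => /andP [_ dX].
by rewrite card_setU3 //; lia.
Qed.

Lemma minor_lambda_ge_card_sup K L X : K \subset S -> L \subset S ->
  X \subset E :\: (K :|: L) -> S \subset X :|: K :|: L ->
  #|X :\: S| <= 1 -> 3 <= theta ->
  #|S| <= lambda (E :\: (K :|: L)) (contr_rank r K) X + #|K| + #|L|.
Proof.
move=> sKS sLS sX sSW hXS ht.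
have sSE : S \subset E by case: hS.
have sXE : X \subset E := subset_trans sX (subsetDl _ _).
have sWE : X :|: K :|: L \subset E.
  by rewrite !subUset sXE (subset_trans sKS sSE) (subset_trans sLS sSE).
have hWS : #|(X :|: K :|: L) :\: S| <= 1.
  apply: leq_trans hXS; apply: subset_leq_card.
  by move: (subset_imply sKS) (subset_imply sLS); set_solve.
have := tangle_indep_lambda_sup sWE sSW hWS ht.
have := lambda_minor_le hM (subset_trans sKS sSE) (subset_trans sLS sSE) sX.
lia.
Qed.

End Independent.
End Tangle.

Section SingleElementExtension.
Variables (T : finType) (E : {set T}) (r : {set T} -> nat) (theta : nat).
Variables (Tg : {set {set T}}) (C D : {set T}) (d : T).
Hypothesis hM : is_matroid E r.
Hypothesis hM3 : three_connected E r.
Hypothesis hT : is_tangle E r theta Tg.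
Hypothesis hCE : C \subset E.
Hypothesis hDE : D \subset E.
Hypothesis hCD : [disjoint C & D].
Hypothesis hI : tangle_indep E r theta Tg (C :|: D).
Hypothesis hN3 : three_connected (E :\: (C :|: D)) (contr_rank r C).
Hypothesis hd : d \in D.
Implicit Types U X Z : {set T}.

Local Notation EN := (E :\: (C :|: D)).
Local Notation E1 := (E :\: (C :|: (D :\ d))).
Local Notation lamN X := (lambda (E :\: (C :|: D)) (contr_rank r C) X).
Local Notation lam1 X := (lambda (E :\: (C :|: (D :\ d))) (contr_rank r C) X).

Let CD_apart y : ~~ ((y \in C) && (y \in D)).
Proof. by apply/negP => /andP [/(disjointFr hCD) ->]. Qed.
Let dE : d \in E. Proof. exact: subsetP hDE d hd. Qed.
Let dNC : d \notin C. Proof. by move: (CD_apart d); rewrite hd andbT. Qed.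
Let dE1 : d \in E1. Proof. by rewrite !inE eqxx dE (negbTE dNC). Qed.

Lemma in_EN x : x \in EN -> [/\ x \in E, x \notin C & x \notin D].
Proof. by rewrite !inE; case: (x \in E); case: (x \in C); case: (x \in D). Qed.

Lemma card_CD : #|C :|: D| = #|C| + #|D :\ d| + 1.
Proof.
rewrite cardsU (disjoint_setI0 hCD) cards0 subn0 (cardsD1 d D) hd; arith.
Qed.

Lemma sep_through_d k X : X \subset E1 -> d \in X -> k < 3 -> k <= #|X| ->
  k <= #|E1 :\: X| -> lam1 X < k ->
  k = 2 /\ exists2 e, e \in EN & X = [set d; e].
Proof.
move=> sX dX hk hX hXc hlt.
have sXdN : X :\ d \subset EN by move: (subset_imply sX); set_solve.
have eN : EN :\: (X :\ d) = E1 :\: X by move: (subset_imply sX); set_solve.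
have hdel : lamN (X :\ d) <= lam1 X.
  have := lambda_minor_delete_le hM hCE (subsetDl _ _) sX dX.
  by have -> : E1 :\ d = EN by set_solve.
have hXd : #|X| = (#|X :\ d|).+1 by rewrite (cardsD1 d X) dX.
have small : #|X :\ d| < k.
  rewrite ltnNge; apply/negP => hk'.
  by have := three_connected_lambda hN3 sXdN hk hk'; rewrite eN => /(_ hXc); arith.
case: (ltnP k 2) => hk2.
  have eX : X = [set d].
    by rewrite -(setD1K dX) (_ : X :\ d = set0) ?setU0 //; apply: cards0_eq; arith.
  have sXCD : X \subset C :|: D by rewrite eX sub1set inE hd orbT.
  have := minor_lambda_ge_card hM hT hI (subsetUl C D) (subset_trans (subsetDl D _) (subsetUr C D))
    (disjointWr (subsetDl _ _) hCD) sX sXCD.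
  arith.
split; first by arith.
have /cards1P [e eXd] : #|X :\ d| == 1 by apply/eqP; arith.
exists e; first by apply: (subsetP sXdN); rewrite eXd set11.
by rewrite -(setD1K dX) eXd.
Qed.

Lemma exists_sep_pair : ~ three_connected E1 (contr_rank r C) ->
  exists2 e, e \in EN & lam1 [set d; e] <= 1 /\ 2 <= #|E1 :\: [set d; e]|.
Proof.
move=> hn.
have [k [X [hk [sX hX hXc hlt]]]] :
    exists k X, k < 3 /\ k_separation E1 (contr_rank r C) k X.
  by apply: NNPP => hne; apply: hn => k X hk hsep; apply: hne; exists k, X.
wlog dX : X sX hX hXc hlt / d \in X.
  move=> hw; case dX: (d \in X); first exact: hw sX hX hXc hlt dX.
  have eX : E1 :\: (E1 :\: X) = X by move: (subset_imply sX); set_solve.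
  apply: (hw (E1 :\: X)); rewrite ?eX -?lambdaC //; first exact: subsetDl.
  by rewrite inE dE1 dX.
case: (sep_through_d sX dX hk hX hXc hlt) => hk2 [e he eX]; subst k.
by exists e; rewrite // -eX; split; arith.
Qed.

Section SeparatingPair.
Variable e : T.
Hypothesis he : e \in EN.
Hypothesis hsep : lam1 [set d; e] <= 1.
Hypothesis hsepc : 2 <= #|E1 :\: [set d; e]|.

Let eE : e \in E. Proof. by case: (in_EN he). Qed.
Let eNC : e \notin C. Proof. by case: (in_EN he). Qed.
Let eND : e \notin D. Proof. by case: (in_EN he). Qed.
Let de : d != e. Proof. by apply: contraNneq eND => <-. Qed.

Lemma card_EN_e : 2 <= #|EN :\ e|.
Proof. by rewrite (_ : EN :\ e = E1 :\: [set d; e]) //; set_solve. Qed.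

(* In N1 the pair {d, e} is a parallel pair of non-loops. *)
Lemma pair_ranks : [/\ r ([set d] :|: C) = r C + 1, r ([set e] :|: C) = r C + 1
  & r ([set d; e] :|: C) = r C + 1].
Proof.
have eY : E1 :\: [set d; e] = EN :\ e by set_solve.
have eEd : E1 :\: [set d] = EN by set_solve.
have sd1 : [set d] \subset E1 by rewrite sub1set.
have sde1 : [set d; e] \subset E1 by set_solve.
have seN : [set e] \subset EN by rewrite sub1set.
have ld : 1 <= lam1 [set d].
  rewrite leqNgt; apply/negP => hlt.
  have hc : 1 <= #|E1 :\: [set d]|.
    by rewrite eEd; have := subset_leq_card (subsetDl EN [set e]); have := card_EN_e; arith.
  have hd1 : 1 <= #|[set d]| by rewrite cards1.
  by case: (sep_through_d (k := 1) sd1 (set11 d) isT hd1 hc hlt).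
have le : 1 <= lamN [set e].
  apply: (three_connected_lambda (k := 1) hN3 seN isT); first by rewrite cards1.
  by have := card_EN_e; arith.
have := lambda_contr_rankE hM hCE (subsetDl _ _) sd1; rewrite eEd.
have := lambda_contr_rankE hM hCE (subsetDl _ _) seN.
have := lambda_contr_rankE hM hCE (subsetDl _ _) sde1; rewrite eY.
have rd : r ([set d] :|: C) <= r C + 1.
  by rewrite -(cards1 d); apply: (rank_le_add_card hM) => //; rewrite ?sub1set //; set_solve.
have re : r ([set e] :|: C) <= r C + 1.
  by rewrite -(cards1 e); apply: (rank_le_add_card hM) => //; rewrite ?sub1set //; set_solve.
have sENC : EN :|: C \subset E by rewrite subUset hCE subsetDl.
have sE1C : E1 :|: C \subset E by rewrite subUset hCE subsetDl.
have : r ((EN :\ e) :|: C) <= r (EN :|: C) by apply: (rank_mono hM) => //; set_solve.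
have : r (EN :|: C) <= r (E1 :|: C) by apply: (rank_mono hM) => //; set_solve.
have : r ([set d] :|: C) <= r ([set d; e] :|: C).
  by apply: (rank_mono hM); [set_solve | rewrite subUset hCE andbT; set_solve].
move=> *; split; arith.
Qed.

Lemma rank_de : 2 <= r [set d; e].
Proof.
have sEN_e : EN :\ e \subset E :\: [set d; e] by set_solve.
exact: three_connected_rank_pair hM hM3 dE eE de
  (leq_trans card_EN_e (subset_leq_card sEN_e)).
Qed.

Hypothesis ht3 : 3 <= theta.

(* Tangle independence of C u D, applied to the set C u D + e. *)
Lemma indep_C_spanning_EN_e : r C = #|C| /\ r (EN :\ e) = r E.
Proof.
have [_ _ rde] := pair_ranks.
have sW : C :|: D :|: [set e] \subset E by rewrite !subUset hCE hDE sub1set eE.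
have sCDW : C :|: D \subset C :|: D :|: [set e] by set_solve.
have hWCD : #|(C :|: D :|: [set e]) :\: (C :|: D)| <= 1.
  by rewrite -(cards1 e); apply: subset_leq_card; set_solve.
have := tangle_indep_lambda_sup hM hT hI sW sCDW hWCD ht3.
have := lambdaE hM sW.
rewrite (_ : E :\: (C :|: D :|: [set e]) = EN :\ e); last by set_solve.
have : r (C :|: D :|: [set e]) <= r ([set d; e] :|: C) + #|D :\ d|.
  apply: (rank_le_add_card hM) => //; first by rewrite subUset hCE andbT; set_solve.
    exact: subset_trans (subsetDl _ _) hDE.
  set_solve.
have : r (EN :\ e) <= r E by apply: (rank_mono hM) => //; set_solve.
have := rank_le_card hM hCE.
have := card_CD.
move=> *; split; arith.
Qed.

Lemma rank_shrink_parallel U :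
  (forall c, c \in C -> r ((C :\ c) :|: [set d; e]) <= #|C|) -> U \subset C ->
  r ((C :\: U) :|: [set d; e]) <= #|C :\: U| + 1.
Proof.
move=> par.
have [_ _ rde] := pair_ranks.
have [rC _] := indep_C_spanning_EN_e.
have sdeE : [set d; e] \subset E by set_solve.
have sCdeE : C :|: [set d; e] \subset E by rewrite subUset hCE.
have rCde : #|C| + 1 <= r (C :|: [set d; e]).
  by rewrite -rC -rde; apply: (rank_mono hM) => //; set_solve.
move En : #|U| => n; elim: n U En => [|n IH] U hn sUC.
  move/cards0_eq: hn => ->; rewrite setD0 -rC -rde.
  by apply: (rank_mono hM); [set_solve | rewrite subUset sdeE hCE].
have /card_gt0P [c cU] : 0 < #|U| by rewrite hn.
have cC : c \in C := subsetP sUC c cU.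
have := IH (U :\ c) _ (subset_trans (subsetDl _ _) sUC).
rewrite (cardsD1 c U) cU in hn; case: hn => hn /(_ hn) IHc.
have sXE : (C :\: (U :\ c)) :|: [set d; e] \subset E.
  by rewrite subUset sdeE andbT (subset_trans (subsetDl _ _) hCE).
have sYE : (C :\ c) :|: [set d; e] \subset E.
  by rewrite subUset sdeE andbT (subset_trans (subsetDl _ _) hCE).
have : r (C :|: [set d; e]) + r ((C :\: U) :|: [set d; e]) <=
       r ((C :\: (U :\ c)) :|: [set d; e]) + r ((C :\ c) :|: [set d; e]).
  by apply: (rank_submod_le hM) => //; move: (subset_imply sUC); set_solve.
have : #|C :\: (U :\ c)| = #|C :\: U| + 1.
  rewrite (cardsD1 c (C :\: (U :\ c))) (_ : (C :\: (U :\ c)) :\ c = C :\: U).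
    by rewrite !inE eqxx cC addnC.
  by set_solve.
by have := par c cC; arith.
Qed.

(* If {d, e} stayed parallel in every M/(C - c), contracting the elements of C
   one at a time would show r {d, e} <= 1, against 3-connectivity of M. *)
Lemma exists_unparallel_c :
  exists2 c, c \in C & #|C| + 1 <= r ((C :\ c) :|: [set d; e]).
Proof.
apply: NNPP => hne.
have par c : c \in C -> r ((C :\ c) :|: [set d; e]) <= #|C|.
  by move=> cC; rewrite leqNgt; apply/negP => h; apply: hne; exists c; rewrite // addn1.
have := rank_shrink_parallel par (subxx C); rewrite setDv set0U cards0.
by have := rank_de; arith.
Qed.

Section Repair.
Variable c : T.
Hypothesis hc : c \in C.
Hypothesis hKde : #|C| + 1 <= r ((C :\ c) :|: [set d; e]).

Local Notation K := (C :\ c).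
Local Notation E2 := (E :\: ((C :\ c) :|: (D :\ d))).
Local Notation lam2 X := (lambda (E :\: ((C :\ c) :|: (D :\ d))) (contr_rank r (C :\ c)) X).

Let cE : c \in E. Proof. exact: subsetP hCE c hc. Qed.
Let cND : c \notin D. Proof. by move: (CD_apart c); rewrite hc. Qed.
Let cd : c != d. Proof. by apply: contraNneq cND => ->. Qed.
Let ce : c != e. Proof. by apply: contraNneq eNC => <-. Qed.
Let sKE : K \subset E. Proof. exact: subset_trans (subsetDl _ _) hCE. Qed.
Let sE2E : E2 \subset E. Proof. exact: subsetDl. Qed.

Lemma indep_K : r K = #|K| /\ #|C| = #|K| + 1.
Proof.
have [rC _] := indep_C_spanning_EN_e.
have : r C <= r K + #|[set c]|.
  by apply: (rank_le_add_card hM) => //; rewrite ?sub1set //; set_solve.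
have := rank_le_card hM sKE.
have : #|C| = #|K| + 1 by rewrite (cardsD1 c C) hc addnC.
rewrite cards1; arith.
Qed.

Lemma rank_spanning_EN_e Z : EN :\ e \subset Z -> Z \subset E -> r Z = r E.
Proof. by apply: rank_spanning; have [] := indep_C_spanning_EN_e. Qed.

Lemma EN_no_loop_coloop a : a \in EN ->
  r ([set a] :|: C) = r C + 1 /\ r ((EN :\ a) :|: C) = r E.
Proof.
move=> ha.
have saN : [set a] \subset EN by rewrite sub1set.
have hl : 1 <= lamN [set a].
  apply: (three_connected_lambda (k := 1) hN3 saN isT); first by rewrite cards1.
  have := subset_leq_card (subsetDl EN [set e]); have := card_EN_e.
  by rewrite (cardsD1 a EN) ha add1n; arith.
have := lambda_contr_rankE hM hCE (subsetDl E (C :|: D)) saN.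
have saE : [set a] \subset E := subset_trans saN (subsetDl _ _).
have sENC : EN :|: C \subset E by rewrite subUset hCE subsetDl.
have : r (EN :|: C) = r E by apply: rank_spanning_EN_e => //; set_solve.
have : r ([set a] :|: C) <= r C + 1.
  by rewrite -(cards1 a); apply: (rank_le_add_card hM) => //; set_solve.
have : r ((EN :\ a) :|: C) <= r (EN :|: C) by apply: (rank_mono hM) => //; set_solve.
move=> *; split; arith.
Qed.

Lemma lambda_N_le_N2 X : X \subset E2 -> lamN (X :&: EN) <= lam2 X.
Proof.
move=> sX.
have [rC _] := indep_C_spanning_EN_e.
have [rK cK] := indep_K.
have := lambda_contr_rankE hM hCE (subsetDl E (C :|: D)) (subsetIr X EN).
rewrite (_ : EN :\: (X :&: EN) = EN :\: X); last by set_solve.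
have := lambda_contr_rankE hM sKE sE2E sX.
have sENC : EN :|: C \subset E by rewrite subUset hCE subsetDl.
have sE2K : E2 :|: K \subset E by rewrite subUset sKE sE2E.
have : r (EN :|: C) = r E by apply: rank_spanning_EN_e => //; set_solve.
have : r (E2 :|: K) = r E by apply: rank_spanning_EN_e => //; set_solve.
have sXE := subset_trans sX sE2E.
have sXK : X :|: K \subset E by rewrite subUset sXE sKE.
have sE2XK : (E2 :\: X) :|: K \subset E.
  by rewrite subUset sKE (subset_trans (subsetDl _ _) sE2E).
have sc : [set c] \subset E by rewrite sub1set.
case cX : (c \in X).
  have : r ((X :&: EN) :|: C) <= r (X :|: K) by apply: (rank_mono hM) => //; set_solve.
  have : r ((EN :\: X) :|: C) <= r ((E2 :\: X) :|: K) + #|[set c]|.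
    by apply: (rank_le_add_card hM) => //; set_solve.
  by rewrite cards1; arith.
have : r ((X :&: EN) :|: C) <= r (X :|: K) + #|[set c]|.
  by apply: (rank_le_add_card hM) => //; set_solve.
have : r ((EN :\: X) :|: C) <= r ((E2 :\: X) :|: K) by apply: (rank_mono hM) => //; set_solve.
by rewrite cards1; arith.
Qed.

Section TwoSeparation.
Variables (X : {set T}) (a : T).
Hypothesis sX : X \subset E2.
Hypothesis eXa : X :&: EN = [set a].
Hypothesis hlX : lam2 X < 2.

Let aXN : a \in X :&: EN. Proof. by rewrite eXa set11. Qed.
Let aX : a \in X. Proof. by move: aXN; rewrite inE => /andP []. Qed.
Let aEN : a \in EN. Proof. by move: aXN; rewrite inE => /andP []. Qed.
Let aE : a \in E. Proof. by case: (in_EN aEN). Qed.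
Let aNC : a \notin C. Proof. by case: (in_EN aEN). Qed.
Let aND : a \notin D. Proof. by case: (in_EN aEN). Qed.
Let ac : a != c. Proof. by apply: contraNneq aNC => ->. Qed.
Let ad : a != d. Proof. by apply: contraNneq aND => ->. Qed.
Let X_EN_a y : ((y \in X) && (y \in EN)) ==> (y == a).
Proof. apply/implyP => hy; have : y \in X :&: EN by rewrite inE. by rewrite eXa inE. Qed.
Let sXE : X \subset E. Proof. exact: subset_trans sX sE2E. Qed.
Let sXK : X :|: K \subset E. Proof. by rewrite subUset sXE sKE. Qed.
Let sE2XK : (E2 :\: X) :|: K \subset E.
Proof. by rewrite subUset sKE (subset_trans (subsetDl _ _) sE2E). Qed.

Lemma lambda2E : lam2 X + #|C| + r E = r (X :|: K) + r ((E2 :\: X) :|: K) + 1.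
Proof.
have [rK cK] := indep_K.
have := lambda_contr_rankE hM sKE sE2E sX.
have : r (E2 :|: K) = r E.
  by apply: rank_spanning_EN_e; [set_solve | rewrite subUset sKE sE2E].
arith.
Qed.

Lemma sep_cd_false : c \in X -> d \in X -> False.
Proof.
move=> cX dX; have [_ cK] := indep_K.
have sCD : C :|: D \subset X :|: K :|: D :\ d by set_solve.
have hXCD : #|X :\: (C :|: D)| <= 1.
  by rewrite -(cards1 a); apply: subset_leq_card; move: (subset_imply sX); set_solve.
have sKCD : K \subset C :|: D by set_solve.
have sDdCD : D :\ d \subset C :|: D by set_solve.
have := minor_lambda_ge_card_sup hM hT hI sKCD sDdCD sX sCD hXCD ht3.
by have := card_CD; arith.
Qed.

Lemma sep_c_false : c \in X -> d \notin X -> False.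
Proof.
move=> cX dNX.
have [rC _] := indep_C_spanning_EN_e.
have [_ _ rde] := pair_ranks.
have [ra raN] := EN_no_loop_coloop aEN.
have : r ([set a] :|: C) <= r (X :|: K) by apply: (rank_mono hM) => //; set_solve.
have : r E <= r ((E2 :\: X) :|: K).
  case: (eqVneq a e) => [ae | ane].
    rewrite (@rank_spanning_EN_e ((E2 :\: X) :|: K)) //.
    by move: (subset_imply sX); rewrite -ae; set_solve.
  have sXKc : ((E2 :\: X) :|: K) :|: [set c] \subset E by rewrite subUset sE2XK sub1set.
  have : r (((E2 :\: X) :|: K) :|: [set c]) + r (K :|: [set d; e]) <=
         r ((E2 :\: X) :|: K) + r ([set d; e] :|: C).
    by apply: (rank_submod_le hM) => //; move: (subset_imply sX) (subset_imply hCE); set_solve.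
  have : r ((EN :\ a) :|: C) <= r (((E2 :\: X) :|: K) :|: [set c]).
    by apply: (rank_mono hM) => //; move: (subset_imply sX); set_solve.
  arith.
have := lambda2E; have := rank_mono hM sE2XK (subxx E); arith.
Qed.

Lemma sep_de_false : c \notin X -> d \in X -> a = e -> False.
Proof.
move=> cNX dX ae.
have : r ((E2 :\: X) :|: K) = r E.
  by apply: rank_spanning_EN_e => //; move: (subset_imply sX); rewrite -ae; set_solve.
have : r (K :|: [set d; e]) <= r (X :|: K).
  by apply: (rank_mono hM) => //; rewrite -ae; set_solve.
by have := lambda2E; arith.
Qed.

(* Here X = {a, d}. *)
Lemma sep_d_pair : c \notin X -> d \in X -> a != e -> lamN [set a; e] <= 1.
Proof.
move=> cNX dX ane.
have [rC _] := indep_C_spanning_EN_e.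
have [rd re rde] := pair_ranks.
have [_ raN] := EN_no_loop_coloop aEN.
have sXKd : ((E2 :\: X) :|: K) :|: [set d] \subset E by rewrite subUset sE2XK sub1set.
have : r (((E2 :\: X) :|: K) :|: [set d]) + r ([set e] :|: C) <=
       r ((E2 :\: X) :|: K) + r ([set d; e] :|: C).
  by apply: (rank_submod_le hM) => //; move: (subset_imply sX) (subset_imply hCE); set_solve.
have : r ((EN :\ a) :|: C) <= r (((E2 :\: X) :|: K) :|: [set d]).
  by apply: (rank_mono hM) => //; move: (subset_imply sX); set_solve.
have := lambda2E; have := rank_mono hM sE2XK (subxx E).
move=> *; have rXK : r (X :|: K) <= #|C| by arith.
have sKad : K :|: [set a; d] \subset E by rewrite subUset sKE; set_solve.
have : r (K :|: [set a; d]) <= r (X :|: K) by apply: (rank_mono hM) => //; set_solve.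
have : r ([set a; d] :|: C) <= r (K :|: [set a; d]) + #|[set c]|.
  by apply: (rank_le_add_card hM) => //; rewrite ?sub1set //; set_solve.
have : r ([set a; e] :|: C) + r ([set d] :|: C) <=
       r ([set a; d] :|: C) + r ([set d; e] :|: C).
  by apply: (rank_submod_le hM); move: (subset_imply hCE); set_solve.
have saeN : [set a; e] \subset EN by set_solve.
have := lambda_contr_rankE hM hCE (subsetDl E (C :|: D)) saeN.
have : r (EN :|: C) = r E by apply: rank_spanning_EN_e; move: (subset_imply hCE); set_solve.
have : r ((EN :\: [set a; e]) :|: C) <= r E.
  apply: (rank_mono hM) => //; rewrite subUset hCE andbT.
  exact: subset_trans (subsetDl _ _) (subsetDl _ _).
by rewrite cards1; arith.
Qed.

(* By [sep_d_pair], N has at most three elements, so X u K u (D - d) and its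
   complement are both too small to avoid the tangle. *)
Lemma sep_d_false : c \notin X -> d \in X -> a != e -> False.
Proof.
move=> cNX dX ane.
have [_ cK] := indep_K.
have saeN : [set a; e] \subset EN by set_solve.
have hEN : #|EN :\: [set a; e]| <= 1.
  rewrite leqNgt; apply/negP => hc2.
  have hae : 2 <= #|[set a; e]| by rewrite cards2 ane.
  have := three_connected_lambda (k := 2) hN3 saeN isT hae hc2.
  by have := sep_d_pair cNX dX ane; arith.
have sDdE : D :\ d \subset E := subset_trans (subsetDl _ _) hDE.
have sWE : X :|: K :|: D :\ d \subset E by rewrite !subUset sXE sKE sDdE.
have hth := tangle_indep_card_le hT hI.
have hcard := card_CD.
have hlt : lambda E r (X :|: K :|: D :\ d) < theta.
  by have := lambda_minor_le hM sKE sDdE sX; arith.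
have eW : E :\: (X :|: K :|: D :\ d) = E2 :\: X.
  by move: (subset_imply sX); set_solve.
have hX : #|X| <= 2.
  apply: leq_trans (subset_leq_card (_ : X \subset [set a; d])) _.
    by move: (subset_imply sX); set_solve.
  by rewrite cards2; case: (a != d).
have hW : #|X :|: K :|: D :\ d| <= theta.
  by have := (leq_card_setU (X :|: K) (D :\ d)).1; have := (leq_card_setU X K).1; arith.
have hE2X : #|E2 :\: X| <= 3.
  have sE2X : E2 :\: X \subset (EN :\: [set a; e]) :|: [set c; e].
    by move: (subset_imply sX); set_solve.
  have := subset_leq_card sE2X.
  have := (leq_card_setU (EN :\: [set a; e]) [set c; e]).1.
  have : #|[set c; e]| <= 2 by rewrite cards2; case: (c != e).
  arith.
have ht2 : 2 <= theta by arith.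
have dW : d \in X :|: K :|: D :\ d by rewrite !inE dX.
have cW : c \in E :\: (X :|: K :|: D :\ d).
  by rewrite eW !inE eqxx cNX cE (negbTE cND) andbF.
have := tangle_lambda_ge_small_sides hM hT sWE dW cW ht2 hW.
by rewrite eW => /(_ (leq_trans hE2X ht3)); arith.
Qed.

End TwoSeparation.

Lemma small_side_false k X : X \subset E2 -> k < 3 -> k <= #|X| ->
  lam2 X < k -> #|X :&: EN| < k -> False.
Proof.
move=> sX hk hX hlt hXN.
case: (posnP #|X :&: EN|) => hXN0.
  have X_EN y : ~~ ((y \in X) && (y \in EN)).
    apply/negP => hy; have : y \in X :&: EN by rewrite inE.
    by rewrite (cards0_eq hXN0) inE.
  have sXCD : X \subset C :|: D by move: (subset_imply sX); set_solve.
  have sKCD : K \subset C :|: D by set_solve.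
  have sDdCD : D :\ d \subset C :|: D by set_solve.
  have dKDd : [disjoint K & D :\ d].
    exact: disjointWl (subsetDl C _) (disjointWr (subsetDl D _) hCD).
  by have := minor_lambda_ge_card hM hT hI sKCD sDdCD dKDd sX sXCD; arith.
have hk2 : k = 2 by arith.
subst k; have /cards1P [a eXa] : #|X :&: EN| == 1 by apply/eqP; arith.
case cX: (c \in X); case dX: (d \in X).
- exact: sep_cd_false sX eXa hlt cX dX.
- exact: sep_c_false sX eXa hlt cX (negbT dX).
- case: (eqVneq a e) => ae.
    exact: sep_de_false sX eXa hlt (negbT cX) dX ae.
  exact: sep_d_false sX eXa hlt (negbT cX) dX ae.
have : X \subset [set a].
  have X_EN_a y : ((y \in X) && (y \in EN)) ==> (y == a).
    apply/implyP => hy; have : y \in X :&: EN by rewrite inE.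
    by rewrite eXa inE.
  by move: (subset_imply sX); set_solve.
by move/subset_leq_card; rewrite cards1; arith.
Qed.

Lemma three_connected_N2 : three_connected E2 (contr_rank r K).
Proof.
move=> k X hk [sX hX hXc hlt].
case: (ltnP #|X :&: EN| k) => hXN; first exact: small_side_false sX hk hX hlt hXN.
have eX : E2 :\: (E2 :\: X) = X by move: (subset_imply sX); set_solve.
case: (ltnP #|(E2 :\: X) :&: EN| k) => hXcN.
  apply: (small_side_false (subsetDl _ _) hk hXc) hXcN.
  by rewrite -lambdaC.
have := three_connected_lambda hN3 (subsetIr X EN) hk hXN.
rewrite (_ : EN :\: (X :&: EN) = (E2 :\: X) :&: EN); last by set_solve.
by move=> /(_ hXcN); have := lambda_N_le_N2 sX; arith.
Qed.

End Repair.
End SeparatingPair.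

Lemma extension_or_contraction_3connected :
  three_connected E1 (contr_rank r C) \/
  exists2 c, c \in C &
    three_connected (E :\: ((C :\ c) :|: (D :\ d))) (contr_rank r (C :\ c)).
Proof.
case: (classic (three_connected E1 (contr_rank r C))) => [|hn]; [by left | right].
have [e he [hsep hsepc]] := exists_sep_pair hn.
have [_ _ rde] := pair_ranks he hsep hsepc.
have hcard := card_CD.
case: (leqP #|C :|: D| 2) => hCD2.
  have /card_gt0P [c cC] : 0 < #|C|.
    rewrite lt0n; apply/negP => /eqP /cards0_eq C0.
    have [eE _ _] := in_EN he.
    have sdeE : [set d; e] :|: C \subset E by rewrite subUset hCE andbT; set_solve.
    have := rank_mono hM (subsetUl [set d; e] C) sdeE.
    by rewrite rde C0 (rank0 hM); have := rank_de he hsepc; arith.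
  have : #|C| = #|C :\ c| + 1 by rewrite (cardsD1 c C) cC addnC.
  move=> cK; have K0 : C :\ c = set0 by apply: cards0_eq; arith.
  have Dd0 : D :\ d = set0 by apply: cards0_eq; arith.
  exists c; rewrite // K0 Dd0 setU0 setD0.
  rewrite (_ : contr_rank r set0 = r) //.
  by apply: functional_extensionality => X; rewrite /contr_rank setU0 (rank0 hM) subn0.
have ht3 : 3 <= theta := leq_trans hCD2 (tangle_indep_card_le hT hI).
have [c cC hKde] := exists_unparallel_c he hsep hsepc ht3.
by exists c => //; exact: (three_connected_N2 he hsep hsepc ht3 cC hKde).
Qed.

End SingleElementExtension.

Theorem lemma4p2 (T : finType) (E : {set T}) (r : {set T} -> nat)
    (theta : nat) (Tg : {set {set T}}) (C D : {set T}) :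
  is_matroid E r ->
  three_connected E r ->
  is_tangle E r theta Tg ->
  C \subset E -> D \subset E -> [disjoint C & D] ->
  tangle_indep E r theta Tg (C :|: D) ->
  three_connected (minor_ground E C D) (contr_rank r C) ->
  forall d, d \in D ->
    three_connected (minor_ground E C (D :\ d)) (contr_rank r C) \/
    exists2 c, c \in C &
      three_connected (minor_ground E (C :\ c) (D :\ d)) (contr_rank r (C :\ c)).
Proof.
move=> hM hM3 hT hCE hDE hCD hI hN3 d hd.
exact: extension_or_contraction_3connected hM hM3 hT hCE hDE hCD hI hN3 hd.
Qed.
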